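(* Let $H$ be a finite graph of girth at least $5$ and minimum degree at least $4$. Then for every $t\in\mathbb N$, every proper layered wheel $W$ of girth at least $5$ contains an $H$-free induced subgraph of treewidth at least $t$.
   Context: A layered wheel is a countably infinite graph $W$ on the same vertex set as a countably infinite, locally finite rooted tree $T$ embedded in the plane, such that: (1) for every natural number $n$, the set $L_n$ (layer) of nodes at distance $n$ from the root induces in $W$ a finite path visiting $L_n$ in the left-to-right order of the embedding; edges inside layers form the set $E_L$; (2) every edge not in $E_L$ joins two nodes in ancestor–descendant relation in $T$; (3) there is a finite bound on the length of paths in $T$ consisting only of degree-$2$ nodes of $T$. $W$ is proper if for every $i\neq j$ there is at least one edge of $W$ between $L_i$ and $L_j$. A graph is $H$-free if no induced subgraph is isomorphic to $H$. The girth is the length of a shortest cycle. *)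

From mathcomp Require Import all_boot.
Set Implicit Arguments. Unset Strict Implicit. Unset Printing Implicit Defensive.

Definition simple_graph (G : Type) (e : rel G) : Prop :=
  symmetric e /\ irreflexive e.

Definition has_cycle_len (G : eqType) (e : rel G) (k : nat) : Prop :=
  exists s : seq G, [/\ size s = k, uniq s & cycle e s].

Definition girth_ge (G : eqType) (e : rel G) (g : nat) : Prop :=
  forall l, 3 <= l -> l < g -> ~ has_cycle_len e l.

Definition min_deg_ge (G : finType) (e : rel G) (d : nat) : Prop :=
  forall x : G, d <= #|[set y | e x y]|.

Definition has_induced_copy (H : finType) (eH : rel H) (G : Type) (eG : rel G)
  : Prop :=
  exists f : H -> G, injective f /\ forall x y, eH x y = eG (f x) (f y).

Definition H_free (H : finType) (eH : rel H) (G : Type) (eG : rel G) : Prop :=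
  ~ has_induced_copy eH eG.

Definition is_tree (I : finType) (te : rel I) : Prop :=
  [/\ simple_graph te, (forall i j, connect te i j)
    & forall l, 3 <= l -> ~ has_cycle_len te l].

Definition tree_decomposition (G : finType) (e : rel G)
  (I : finType) (te : rel I) (bag : I -> {set G}) : Prop :=
  [/\ is_tree te,
      (forall v, exists i, v \in bag i),
      (forall u v, e u v -> exists i, (u \in bag i) && (v \in bag i))
    & (forall v i j, v \in bag i -> v \in bag j ->
         connect [rel a b | [&& te a b, v \in bag a & v \in bag b]] i j)].

(* treewidth of (G,e) is at least k: every tree decomposition has a bag of
   size at least k+1 (i.e. width >= k) *)
Definition tw_ge (G : finType) (e : rel G) (k : nat) : Prop :=
  forall (I : finType) (te : rel I) (bag : I -> {set G}),
    tree_decomposition e te bag -> exists i, k < #|bag i|.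

Definition induced_on (adj : rel nat) (S : seq nat) : rel (seq_sub S) :=
  fun x y => adj (val x) (val y).
Arguments induced_on adj S : clear implicits.

(* The rooted tree T has vertex set nat, root r, parent function par, and
   depth function dep (dep v = distance from v to the root in T).
   The plane embedding is encoded by a position function pos giving the
   left-to-right order of each layer; it is compatible with the tree
   (children of left nodes are to the left of children of right nodes). *)

Definition rooted_tree (r : nat) (par dep : nat -> nat) : Prop :=
  dep r = 0 /\ forall v, v <> r -> dep v = (dep (par v)).+1.

Definition locally_finite (r : nat) (par : nat -> nat) : Prop :=
  forall v, exists m, forall c, c <> r -> par c = v -> c < m.

Definition plane_order (r : nat) (par dep pos : nat -> nat) : Prop :=
  (forall u v, dep u = dep v -> u <> v -> pos u <> pos v) /\
  (forall u v, u <> r -> v <> r -> dep u = dep v ->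
     pos (par u) < pos (par v) -> pos u < pos v).

Definition consec (dep pos : nat -> nat) (u v : nat) : Prop :=
  [/\ dep u = dep v, pos u < pos v &
      ~ exists w, [/\ dep w = dep u, pos u < pos w & pos w < pos v]].

Definition ancestor (par dep : nat -> nat) (u v : nat) : Prop :=
  dep u < dep v /\ iter (dep v - dep u) par v = u.

Definition tadj (r : nat) (par : nat -> nat) : rel nat :=
  fun u v => ((u != r) && (par u == v)) || ((v != r) && (par v == u)).

Definition tdeg2 (r : nat) (par : nat -> nat) (v : nat) : Prop :=
  exists a b, [/\ a <> b, tadj r par v a, tadj r par v b &
                  forall c, tadj r par v c -> c = a \/ c = b].

Definition layered_wheel (adj : rel nat) (r : nat) (par dep pos : nat -> nat)
  : Prop :=
  simple_graph adj /\
  rooted_tree r par dep /\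
  locally_finite r par /\
  plane_order r par dep pos /\
  (forall u v, dep u = dep v ->
     (adj u v <-> consec dep pos u v \/ consec dep pos v u)) /\
  (forall u v, adj u v -> dep u <> dep v ->
     ancestor par dep u v \/ ancestor par dep v u) /\
  (exists B, forall x s, uniq (x :: s) -> path (tadj r par) x s ->
     (forall y, y \in x :: s -> tdeg2 r par y) -> size s <= B).

Definition proper_lw (adj : rel nat) (dep : nat -> nat) : Prop :=
  forall i j, i <> j -> exists u v, [/\ dep u = i, dep v = j & adj u v].

(* Choose t+1 layers of W one after another, each so deep that none of its
   vertices has two neighbours in the layers chosen before: since W has girth
   at least 5, two vertices have at most one common neighbour, and the layers
   chosen so far are finite.  Let S be the union of the chosen layers.  In any
   finite induced subgraph of W[S], the rightmost vertex of the deepest layer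
   has at most one neighbour in its own layer and at most one below, so it has
   degree at most 2 and H is not induced.  The chosen layers induce paths and
   pairwise touch because W is proper, so they form a bramble of t+1 disjoint
   sets; by the Helly property of subtrees of a tree, some bag of every tree
   decomposition meets all of them. *)

From mathcomp Require Import all_boot zify.
From Stdlib Require Import Classical.
Set Implicit Arguments. Unset Strict Implicit. Unset Printing Implicit Defensive.

Definition rel_on (T : finType) (e : rel T) (Y : {set T}) : rel T :=
  fun a b => [&& e a b, a \in Y & b \in Y].

Definition connected_on (T : finType) (e : rel T) (Y : {set T}) : Prop :=
  forall a b, a \in Y -> b \in Y -> connect (rel_on e Y) a b.

Lemma rel_on_sym (T : finType) (e : rel T) (Y : {set T}) :
  symmetric e -> symmetric (rel_on e Y).
Proof. by move=> e_sym a b; rewrite /rel_on (e_sym a) [(a \in Y) && _]andbC. Qed.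

Lemma connect_first_step (T : finType) (e : rel T) a b :
  connect e a b -> a != b -> exists c, e a c.
Proof.
move=> /connectP [[|c s] /= + ->]; first by rewrite eqxx.
by case/andP=> eac _ _; exists c.
Qed.

Section ForestHelly.
Variables (I : finType) (te : rel I).
Hypotheses (te_sym : symmetric te) (te_irr : irreflexive te).
Hypothesis te_acyclic : forall l, 3 <= l -> ~ has_cycle_len te l.

Lemma path_rel_on_setD1 (Y : {set I}) l p :
    (forall q, q \in Y -> te l q -> q = p) ->
  forall s a, a != l -> last a s != l -> uniq (a :: s) ->
  path (rel_on te Y) a s -> path (rel_on te (Y :\ l)) a s.
Proof.
move=> l_leaf; elim=> [//|c s IHs] a al_neq last_neq /= /andP [a_notin uniq_cs].
case/andP=> /and3P [e_ac aY cY] path_cs.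
have cl_neq : c != l.
  apply: contraTneq last_neq => c_l; subst c.
  case: s {IHs} a_notin uniq_cs path_cs => [|d s]; first by rewrite /= eqxx.
  move=> /= a_notin _ /andP [/and3P [e_ld _ dY] _].
  have a_p : a = p by apply: l_leaf; rewrite // te_sym.
  by rewrite a_p (l_leaf d dY e_ld) !inE eqxx orbT in a_notin.
by rewrite /rel_on e_ac !inE al_neq cl_neq aY cY IHs.
Qed.

Lemma connected_on_setD1 (Y : {set I}) l p :
    (forall q, q \in Y -> te l q -> q = p) ->
  connected_on te Y -> connected_on te (Y :\ l).
Proof.
move=> l_leaf Yconn a b /setD1P [al_neq aY] /setD1P [bl_neq bY].
have /connectP [s path_s b_last] := Yconn a b aY bY.
rewrite {}b_last in bl_neq *.
case: (shortenP path_s) bl_neq => s' path_s' uniq_s' _ bl_neq.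
apply/connectP; exists s' => //.
exact: path_rel_on_setD1 l_leaf _ _ al_neq bl_neq uniq_s' path_s'.
Qed.

Lemma path_no_chord l p q s : uniq (l :: p :: s) -> path te l (p :: s) ->
  q \in s -> ~~ te l q.
Proof.
move=> + + q_s; case/splitPr: q_s => s1 s2.
have -> : l :: p :: s1 ++ q :: s2 = (l :: p :: rcons s1 q) ++ s2.
  by rewrite /= cat_rcons.
rewrite cat_uniq => /andP [uniq_cyc _].
rewrite -cat_rcons -cat_cons cat_path => /andP [path_cyc _].
apply/negP => e_lq.
apply: (te_acyclic (l := size (l :: p :: rcons s1 q))).
  by rewrite /= size_rcons.
exists (l :: p :: rcons s1 q); split=> //.
by rewrite /cycle rcons_path path_cyc /= last_rcons te_sym.
Qed.

Lemma long_paths_of_no_leaf (X : {set I}) :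
    connected_on te X -> 1 < #|X| ->
    (forall l p, l \in X -> p \in X -> te l p ->
       exists2 q, q \in X & te l q && (q != p)) ->
  forall n, exists l p s,
    [/\ uniq (l :: p :: s), path (rel_on te X) l (p :: s) & size s = n].
Proof.
move=> Xconn /card_gt1P [a [b [aX bX ab_neq]]] no_leaf.
elim=> [|n [l [p [s [uniq_lps path_lps size_s]]]]].
  have [c /and3P [e_ac _ cX]] :=
    connect_first_step (Xconn a b aX bX) ab_neq.
  exists a, c, [::]; split=> //=; last by rewrite /rel_on e_ac aX cX.
  by rewrite inE andbT; apply: contraTneq e_ac => ->; rewrite te_irr.
move: (path_lps) => /= /andP [/and3P [e_lp lX pX] path_ps].
have [q qX /andP [e_lq qp_neq]] := no_leaf l p lX pX e_lp.
exists q, l, (p :: s); split; last by rewrite /= size_s.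
- suff q_lps : q \notin l :: p :: s by rewrite q_lps.
  rewrite !inE (negbTE qp_neq) /= negb_or.
  apply/andP; split; first by apply: contraTneq e_lq => ->; rewrite te_irr.
  apply: contraL e_lq => q_s; apply: path_no_chord uniq_lps _ q_s.
  by apply: sub_path path_lps => x y /and3P [].
- by rewrite /= {1}/rel_on te_sym e_lq qX lX; rewrite /= in path_lps.
Qed.

Lemma exists_leaf (X : {set I}) : connected_on te X -> 1 < #|X| ->
  exists l p, [/\ l \in X, p \in X, te l p
                & forall q, q \in X -> te l q -> q = p].
Proof.
move=> Xconn X_gt1; apply: NNPP => no_leaf.
have [l [p [s [/card_uniqP card_lps _ size_s]]]] :
    exists l p s, [/\ uniq (l :: p :: s), path (rel_on te X) l (p :: s)
                    & size s = #|I|].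
  apply: long_paths_of_no_leaf => // l p lX pX e_lp.
  apply: NNPP => no_q; apply: no_leaf; exists l, p; split=> // q qX e_lq.
  by apply: NNPP => qp_neq; apply: no_q; exists q; rewrite // e_lq; apply/eqP.
by have := max_card (mem (l :: p :: s)); rewrite card_lps /= size_s ltnNge leqW.
Qed.

Theorem subtree_helly (X : {set I}) (Ts : seq {set I}) :
    connected_on te X -> Ts != [::] ->
    (forall T, T \in Ts -> T \subset X /\ connected_on te T) ->
    (forall T T', T \in Ts -> T' \in Ts -> T :&: T' != set0) ->
  exists x, forall T, T \in Ts -> x \in T.
Proof.
have [n] := ubnP #|X|; elim: n X Ts => // n IHn X Ts.
move=> X_lt Xconn Ts_nil Ts_sub Ts_meet.
have [T0 T0_Ts] : exists T0, T0 \in Ts.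
  by case: Ts Ts_nil {Ts_sub Ts_meet} => // T0 Ts _; exists T0; rewrite mem_head.
have [X_le1 | X_gt1] := leqP #|X| 1.
  have T0X := (Ts_sub T0 T0_Ts).1.
  have /set0Pn [a /setIP [aT0 _]] := Ts_meet T0 T0 T0_Ts T0_Ts.
  exists a => T T_Ts.
  have /set0Pn [b /setIP [bT0 bT]] := Ts_meet T0 T T0_Ts T_Ts.
  by rewrite ((card_le1_eqP X_le1) b a) ?(subsetP T0X).
have [l [p [lX pX e_lp l_leaf]]] := exists_leaf Xconn X_gt1.
(* Either some T is {l}, and then l lies in every T, or removing the leaf l
   from X and from every T preserves all the hypotheses. *)
have [/hasP [T1 T1_Ts T1_l] | /hasPn Ts_nl] :=
  boolP (has (fun T : {set I} => T \subset [set l]) Ts).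
  exists l => T T_Ts.
  have /set0Pn [a /setIP [aT1 aT]] := Ts_meet T1 T T1_Ts T_Ts.
  by move: (subsetP T1_l a aT1) aT; rewrite inE => /eqP ->.
have l_p : forall T, T \in Ts -> l \in T -> p \in T.
  move=> T T_Ts lT; have [TX Tconn] := Ts_sub T T_Ts.
  have /subsetPn [a aT] := Ts_nl T T_Ts; rewrite inE eq_sym => la_neq.
  have [c /and3P [e_lc _ cT]] := connect_first_step (Tconn l a lT aT) la_neq.
  by rewrite -(l_leaf c (subsetP TX c cT) e_lc).
have [x x_in] : exists x, forall T, T \in [seq T :\ l | T <- Ts] -> x \in T.
  apply: (IHn (X :\ l)).
  - by move: X_lt; rewrite (cardsD1 l X) lX.
  - exact: connected_on_setD1 l_leaf Xconn.
  - by case: Ts Ts_nil {Ts_sub Ts_meet T0_Ts Ts_nl l_p}.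
  - move=> _ /mapP [T T_Ts ->]; have [TX Tconn] := Ts_sub T T_Ts.
    split; first exact: setSD.
    by apply: connected_on_setD1 Tconn => q qT; apply: l_leaf (subsetP TX q qT).
  - move=> _ _ /mapP [T1 T1_Ts ->] /mapP [T2 T2_Ts ->].
    have /set0Pn [a /setIP [aT1 aT2]] := Ts_meet T1 T2 T1_Ts T2_Ts.
    have pl_neq : p != l by apply: contraTneq e_lp => ->; rewrite te_irr.
    apply/set0Pn; have [al | al_neq] := eqVneq a l.
      by exists p; rewrite !inE pl_neq (l_p T1) ?(l_p T2) // -al.
    by exists a; rewrite !inE al_neq aT1 aT2.
exists x => T T_Ts.
by have := x_in _ (map_f (fun T => T :\ l) T_Ts); rewrite inE => /andP [].
Qed.

End ForestHelly.

Definition touching (G : finType) (e : rel G) (A B : {set G}) : Prop :=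
  exists u v, [/\ u \in A, v \in B & (u == v) || e u v].

Definition bramble (G : finType) (e : rel G) (Bs : seq {set G}) : Prop :=
  (forall B, B \in Bs -> connected_on e B) /\
  (forall B B', B \in Bs -> B' \in Bs -> touching e B B').

Section TreeDecomposition.
Variables (G : finType) (e : rel G) (I : finType) (te : rel I).
Variable bag : I -> {set G}.
Hypothesis td : tree_decomposition e te bag.

Definition bags_meeting (B : {set G}) : {set I} := [set i | B :&: bag i != set0].

Lemma bags_meetingP (B : {set G}) i :
  reflect (exists2 v, v \in B & v \in bag i) (i \in bags_meeting B).
Proof.
rewrite /bags_meeting inE.
apply: (iffP (set0Pn _)) => [[v /setIP []] | [v vB vi]]; first by exists v.
by exists v; rewrite inE vB.
Qed.

Lemma connect_bags_of_vertex (B : {set G}) y k m :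
  y \in B -> y \in bag k -> y \in bag m ->
  connect (rel_on te (bags_meeting B)) k m.
Proof.
case: td => _ _ _ td_vertex yB yk ym.
apply: connect_sub (td_vertex y k m yk ym) => a b /and3P [e_ab ya yb].
by apply: connect1; apply/and3P; split=> //; apply/bags_meetingP; exists y.
Qed.

Lemma bags_meeting_connected (B : {set G}) :
  connected_on e B -> connected_on te (bags_meeting B).
Proof.
move=> Bconn i j /bags_meetingP [u uB ui] /bags_meetingP [v vB vj].
have /connectP [s path_s v_last] := Bconn u v uB vB.
rewrite {v vB}v_last in vj.
elim: s u i uB ui path_s vj => [|w s IHs] u i uB ui /=.
  by move=> _; apply: connect_bags_of_vertex.
case/andP=> /and3P [e_uw _ wB] path_s wj.
case: td => _ _ td_edge _; have [m /andP [um wm]] := td_edge u w e_uw.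
apply: connect_trans (connect_bags_of_vertex uB ui um) _.
exact: IHs wB wm path_s wj.
Qed.

Lemma bramble_hitting_bag (Bs : seq {set G}) : Bs != [::] -> bramble e Bs ->
  exists i, forall B, B \in Bs -> exists2 v, v \in B & v \in bag i.
Proof.
move=> Bs_nil [Bs_conn Bs_touch].
case: (td) => -[[te_sym te_irr] te_conn te_acyclic] td_cover td_edge _.
have [i hit] : exists i, forall T, T \in [seq bags_meeting B | B <- Bs] -> i \in T.
  apply: (subtree_helly te_sym te_irr te_acyclic (X := [set: I])).
  - move=> a b _ _; apply: connect_sub (te_conn a b) => x y e_xy.
    by apply: connect1; rewrite /rel_on e_xy !inE.
  - by case: Bs Bs_nil {Bs_conn Bs_touch}.
  - move=> _ /mapP [B B_Bs ->]; split; first exact: subsetT.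
    exact: bags_meeting_connected (Bs_conn B B_Bs).
  - move=> _ _ /mapP [B1 B1_Bs ->] /mapP [B2 B2_Bs ->]; apply/set0Pn.
    have [u [v [uB1 vB2 /orP [/eqP uv | e_uv]]]] := Bs_touch B1 B2 B1_Bs B2_Bs.
      have [m um] := td_cover u; exists m; rewrite inE.
      by apply/andP; split; apply/bags_meetingP; exists u; rewrite // uv.
    have [m /andP [um vm]] := td_edge u v e_uv; exists m; rewrite inE.
    by apply/andP; split; apply/bags_meetingP; [exists u | exists v].
by exists i => B B_Bs; apply/bags_meetingP/hit/map_f.
Qed.

End TreeDecomposition.

Lemma tw_ge_fibre_bramble (G : finType) (e : rel G) (f : G -> nat)
    (Is : seq nat) k :
  uniq Is -> k < size Is -> bramble e [seq [set u | f u == d] | d <- Is] ->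
  tw_ge e k.
Proof.
move=> Is_uniq k_lt Bs_bramble I te bag td.
have [|i hit] := bramble_hitting_bag td _ Bs_bramble.
  by case: Is k_lt {Is_uniq Bs_bramble}.
exists i; apply: leq_trans k_lt _.
have Is_sub : {subset Is <= [seq f u | u <- enum (bag i)]}.
  move=> d d_Is; have [u] := hit _ (map_f _ d_Is).
  by rewrite inE => /eqP <- ui; apply: map_f; rewrite mem_enum.
by have := uniq_leq_size Is_uniq Is_sub; rewrite size_map -cardE.
Qed.

Lemma girth5_common_nbr (T : eqType) (e : rel T) x y w w' :
    symmetric e -> irreflexive e -> girth_ge e 5 -> x != y ->
  e w x -> e w y -> e w' x -> e w' y -> w = w'.
Proof.
move=> e_sym e_irr e_girth xy wx wy w'x w'y; apply/eqP/negP => /negP ww'.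
have e_neq a b : e a b -> a != b by apply: contraTneq => ->; rewrite e_irr.
apply: (e_girth 4) => //; exists [:: x; w; y; w']; split=> //.
  rewrite /= !inE !negb_or xy ww' eq_sym (e_neq _ _ wx) (e_neq _ _ wy).
  by rewrite [x == _]eq_sym (e_neq _ _ w'x) [y == _]eq_sym (e_neq _ _ w'y).
by rewrite /cycle /= (e_sym x) wx wy (e_sym y) w'y w'x.
Qed.

Lemma uniform_bound M (P : nat -> nat -> Prop) :
    (forall x, x < M -> exists D, forall y, P x y -> y < D) ->
  exists D, forall x y, x < M -> P x y -> y < D.
Proof.
elim: M => [|M IHM] bounded; first by exists 0.
have [D1 D1_bound] := IHM (fun x x_lt => bounded x (ltnW x_lt)).
have [D2 D2_bound] := bounded M (ltnSn M).
exists (maxn D1 D2) => x y; rewrite ltnS leq_eqVlt => /orP [/eqP -> | x_lt] Pxy.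
  by rewrite leq_max (D2_bound y Pxy) orbT.
by rewrite leq_max (D1_bound x y x_lt Pxy).
Qed.

Section LayeredWheel.
Variables (adj : rel nat) (r : nat) (par dep pos : nat -> nat).
Hypothesis lw : layered_wheel adj r par dep pos.

Lemma lw_sym : symmetric adj. Proof. by case: lw => -[]. Qed.
Lemma lw_irr : irreflexive adj. Proof. by case: lw => -[]. Qed.

Lemma dep_par v : v <> r -> dep v = (dep (par v)).+1.
Proof. by case: lw => _ [[_ /(_ v)]]. Qed.

Lemma pos_inj u v : dep u = dep v -> pos u = pos v -> u = v.
Proof.
case: lw => _ [_ [_ [[pos_neq _] _]]] uv_dep uv_pos.
by apply: NNPP => uv_neq; apply: pos_neq uv_dep uv_neq uv_pos.
Qed.

Lemma layer_adj u v : dep u = dep v ->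
  adj u v <-> consec dep pos u v \/ consec dep pos v u.
Proof. by case: lw => _ [_ [_ [_ [lw_layer _]]]]; apply: lw_layer. Qed.

Lemma consec_left_unique u1 u2 v :
  consec dep pos u1 v -> consec dep pos u2 v -> u1 = u2.
Proof.
move=> [dep1 pos1 between1] [dep2 pos2 between2].
have dep12 : dep u1 = dep u2 by rewrite dep1 dep2.
case: (ltngtP (pos u1) (pos u2)) => [lt12 | lt21 | ]; last exact: pos_inj.
  by case: between1; exists u2.
by case: between2; exists u1.
Qed.

Lemma left_layer_nbr u v : adj u v -> dep u = dep v -> pos v <= pos u ->
  consec dep pos v u.
Proof.
move=> uv dep_uv; have [[_ pos_uv _] | //] := (layer_adj dep_uv).1 uv.
by rewrite leqNgt pos_uv.
Qed.

Lemma children_bounded M : exists D, forall c, c <> r -> par c < M -> c < D.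
Proof.
have [|D D_bound] := @uniform_bound M (fun p c => c <> r /\ par c = p).
  case: lw => _ [_ [lw_fin _]] p _; have [D D_bound] := lw_fin p.
  by exists D => c [cr cp]; apply: D_bound.
by exists D => c cr c_lt; apply: D_bound c_lt _.
Qed.

Lemma depth_bounded d : exists M, forall v, dep v <= d -> v < M.
Proof.
elim: d => [|d [M M_bound]].
  exists r.+1 => v; rewrite leqn0 ltnS => /eqP v_dep.
  by case: (eqVneq v r) => [-> // | /eqP vr]; rewrite dep_par in v_dep.
have [D D_bound] := children_bounded M.
exists (maxn r.+1 D) => v v_dep; rewrite leq_max.
case: (eqVneq v r) => [-> | /eqP vr]; first by rewrite ltnSn.
by rewrite D_bound ?orbT // M_bound // -ltnS -dep_par.
Qed.

Lemma layers_bounded (Is : seq nat) : exists M, forall v, dep v \in Is -> v < M.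
Proof.
have [M M_bound] := depth_bounded (\max_(i <- Is) i).
by exists M => v v_Is; apply/M_bound/leq_bigmax_seq.
Qed.

Definition lower_nbr_unique (Is : seq nat) : Prop :=
  forall w x y, dep w \in Is -> dep x \in Is -> dep y \in Is ->
  dep x < dep w -> dep y < dep w -> adj w x -> adj w y -> x = y.

Section SparseLayers.
Hypothesis lw_girth : girth_ge adj 5.

Lemma common_nbr_depth_bounded M : exists D, forall w x y,
  x < M -> y < M -> x != y -> adj w x -> adj w y -> dep w < D.
Proof.
have pair_bounded x y : exists D, forall w,
    x != y -> adj w x -> adj w y -> dep w < D.
  have [[w0 [xy w0x w0y]] | none] :=
    classic (exists w, [/\ x != y, adj w x & adj w y]).
    exists (dep w0).+1 => w _ wx wy.
    by rewrite (girth5_common_nbr lw_sym lw_irr lw_girth xy wx wy w0x w0y).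
  by exists 0 => w xy wx wy; case: none; exists w.
pose P x d := exists y w, [/\ y < M, x != y, adj w x, adj w y & d = dep w].
have [|D D_bound] := @uniform_bound M P.
  move=> x _.
  have [|D D_bound] := @uniform_bound M
    (fun y d => exists w, [/\ x != y, adj w x, adj w y & d = dep w]).
    move=> y _; have [D D_bound] := pair_bounded x y.
    by exists D => _ [w [xy wx wy ->]]; apply: D_bound.
  by exists D => _ [y [w [y_lt xy wx wy ->]]]; apply: D_bound y_lt _; exists w.
by exists D => w x y x_lt y_lt xy wx wy; apply: D_bound x_lt _; exists y, w.
Qed.

Lemma exists_sparse_layers m :
  exists Is, [/\ uniq Is, size Is = m & lower_nbr_unique Is].
Proof.
elim: m => [|m [Is [Is_uniq Is_size Is_sparse]]]; first by exists [::].
have [M M_bound] := layers_bounded Is.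
have [D D_bound] := common_nbr_depth_bounded M.
pose d := maxn D (\max_(i <- Is) i).+1.
have Is_lt_d i : i \in Is -> i < d.
  by move=> i_Is; rewrite leq_max ltnS leq_bigmax_seq ?orbT.
have lower_in_Is u z : dep u \in d :: Is -> dep z \in d :: Is ->
    dep z < dep u -> dep z \in Is.
  rewrite !inE => u_in /orP [/eqP z_d | //] zu.
  have : dep u <= d by case/orP: u_in => [/eqP -> // | /Is_lt_d /ltnW].
  by rewrite leqNgt -z_d zu.
exists (d :: Is); split=> /=; last 1 first.
- move=> w x y w_in x_in y_in xw yw wx wy.
  have x_Is := lower_in_Is w x w_in x_in xw.
  have y_Is := lower_in_Is w y w_in y_in yw.
  case/predU1P: w_in => [w_d | w_Is].
    apply/eqP; apply: contraT => xy.
    have := D_bound w x y (M_bound x x_Is) (M_bound y y_Is) xy wx wy.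
    by rewrite w_d ltnNge leq_maxl.
  exact: Is_sparse w_Is x_Is y_Is xw yw wx wy.
- by rewrite Is_uniq andbT; apply: contraT => /negbNE /Is_lt_d; rewrite ltnn.
- by rewrite Is_size.
Qed.

End SparseLayers.

Lemma copy_has_low_degree (H : finType) (eH : rel H) (g : H -> nat)
    (Is : seq nat) :
    0 < #|H| -> injective g -> (forall x y, eH x y = adj (g x) (g y)) ->
    (forall h, dep (g h) \in Is) -> lower_nbr_unique Is ->
  exists h, #|[set y | eH h y]| <= 2.
Proof.
move=> /card_gt0P [h0 _] g_inj gE g_Is Is_sparse.
(* hs is the rightmost vertex of the deepest layer met by g. *)
pose top := [arg max_(h > h0) dep (g h)].
have [hs /eqP hs_dep hs_max] :=
  @arg_maxnP H top (fun h => dep (g h) == dep (g top)) (fun h => pos (g h))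
    (eqxx _).
have dep_max h : dep (g h) <= dep (g hs).
  rewrite hs_dep /top.
  by case: (@arg_maxnP H h0 xpredT (fun h => dep (g h)) isT) => t _; apply.
exists hs.
pose same := [set y | eH hs y && (dep (g y) == dep (g hs))].
pose lower := [set y | eH hs y && (dep (g y) < dep (g hs))].
have same_le1 : #|same| <= 1.
  apply/card_le1_eqP => y1 y2.
  rewrite !inE => /andP [e1 /eqP dep1] /andP [e2 /eqP dep2].
  have left_of y : eH hs y -> dep (g y) = dep (g hs) ->
      consec dep pos (g y) (g hs).
    move=> e_y dep_y; apply: left_layer_nbr; rewrite -?gE //.
    by apply: hs_max; rewrite /= dep_y hs_dep.
  apply: g_inj.
  exact: consec_left_unique (left_of y2 e2 dep2) (left_of y1 e1 dep1).
have lower_le1 : #|lower| <= 1.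
  apply/card_le1_eqP => y1 y2; rewrite !inE => /andP [e1 lt1] /andP [e2 lt2].
  apply: g_inj; apply: Is_sparse (g_Is _) (g_Is _) (g_Is _) lt2 lt1 _ _;
    by rewrite -gE.
apply: leq_trans (leq_add same_le1 lower_le1).
apply: leq_trans (leq_card_setU same lower).
apply: subset_leq_card.
apply/subsetP => y; rewrite !inE => e_y; rewrite e_y /= -leq_eqVlt.
exact: dep_max.
Qed.

Section Layers.
Variables (Is S : seq nat).
Hypothesis memS : forall v, (v \in S) = (dep v \in Is).

Lemma layers_H_free (H : finType) (eH : rel H) :
  0 < #|H| -> min_deg_ge eH 3 -> lower_nbr_unique Is ->
  H_free eH (induced_on adj S).
Proof.
move=> H_nonempty H_deg Is_sparse [f [f_inj fE]].
have g_Is h : dep (val (f h)) \in Is by rewrite -memS; apply: valP.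
have [h deg_h] :=
  copy_has_low_degree H_nonempty (inj_comp val_inj f_inj) fE g_Is Is_sparse.
by have := leq_trans (H_deg h) deg_h.
Qed.

Definition layer d : {set seq_sub S} := [set u | dep (val u) == d].

Lemma layer_connect n d (a b : seq_sub S) :
    dep (val a) = d -> dep (val b) = d ->
    pos (val a) < pos (val b) <= pos (val a) + n ->
  connect (rel_on (induced_on adj S) (layer d)) a b.
Proof.
elim: n a b => [|n IHn] a b a_d b_d /andP [ab_lt b_le].
  by rewrite addn0 leqNgt ab_lt in b_le.
have [[w [w_dep aw_lt wb_lt]] | no_between] := classic
  (exists w, [/\ dep w = dep (val a), pos (val a) < pos w & pos w < pos (val b)]).
  have wS : w \in S by rewrite memS w_dep -memS; apply: valP.
  pose w' : seq_sub S := SeqSub wS; have w'E : val w' = w by [].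
  by apply: (connect_trans (y := w')); apply: IHn; rewrite ?w'E ?w_dep //; lia.
apply: connect1; rewrite /rel_on /induced_on !inE a_d b_d eqxx !andbT.
have ab_dep : dep (val a) = dep (val b) by rewrite a_d b_d.
by apply/(layer_adj ab_dep).2; left; split.
Qed.

Lemma layer_connected d : connected_on (induced_on adj S) (layer d).
Proof.
have layer_sym : symmetric (rel_on (induced_on adj S) (layer d)).
  by apply: rel_on_sym => a b; apply: lw_sym.
move=> a b; rewrite !inE => /eqP a_d /eqP b_d.
wlog ab_le : a b a_d b_d / pos (val a) <= pos (val b).
  move=> wlog_le; have [|/ltnW ba_le] := leqP (pos (val a)) (pos (val b)).
    exact: wlog_le.
  by rewrite (sym_connect_sym layer_sym); apply: wlog_le.
move: ab_le; rewrite leq_eqVlt => /orP [/eqP ab_pos | ab_lt].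
  by rewrite (val_inj (pos_inj _ ab_pos)) ?a_d ?b_d.
by apply: (@layer_connect (pos (val b)) d a b a_d b_d); rewrite ab_lt leq_addl.
Qed.

Lemma layers_bramble : proper_lw adj dep ->
  bramble (induced_on adj S) [seq layer d | d <- Is].
Proof.
move=> lw_proper; split; first by move=> _ /mapP [d _ ->]; apply: layer_connected.
move=> _ _ /mapP [d d_Is ->] /mapP [d' d'_Is ->].
have [<- | dd'] := eqVneq d d'.
  have [u [_ [u_d _ _]]] := lw_proper d d.+1 (@n_Sn d).
  have uS : u \in S by rewrite memS u_d.
  by exists (SeqSub uS), (SeqSub uS); rewrite /layer !inE /= u_d !eqxx.
have [u [v [u_d v_d uv]]] := lw_proper d d' (elimN eqP dd').
have uS : u \in S by rewrite memS u_d.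
have vS : v \in S by rewrite memS v_d.
exists (SeqSub uS), (SeqSub vS).
by rewrite /layer !inE /= u_d v_d !eqxx /induced_on uv orbT.
Qed.

Lemma layers_tw_ge k : proper_lw adj dep -> uniq Is -> k < size Is ->
  tw_ge (induced_on adj S) k.
Proof.
move=> lw_proper Is_uniq k_lt.
exact: (tw_ge_fibre_bramble (f := fun u => dep (val u)) Is_uniq k_lt
  (layers_bramble lw_proper)).
Qed.

End Layers.
End LayeredWheel.

Theorem lemma5p3 (H : finType) (eH : rel H)
  (Hsimple : simple_graph eH) (Hne : 0 < #|H|)
  (Hgirth : girth_ge eH 5) (Hdeg : min_deg_ge eH 4)
  (adj : rel nat) (r : nat) (par dep pos : nat -> nat)
  (W_lw : layered_wheel adj r par dep pos) (W_proper : proper_lw adj dep)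
  (W_girth : girth_ge adj 5) :
  forall t : nat, exists S : seq nat,
    H_free eH (induced_on adj S) /\ tw_ge (induced_on adj S) t.
Proof.
move=> t.
have [Is [Is_uniq Is_size Is_sparse]] := exists_sparse_layers W_lw W_girth t.+1.
have [M M_bound] := layers_bounded W_lw Is.
pose S := [seq v <- iota 0 M | dep v \in Is].
have memS v : (v \in S) = (dep v \in Is).
  rewrite mem_filter mem_iota /=.
  by case: (boolP (dep v \in Is)) => // /M_bound ->.
have t_lt : t < size Is by rewrite Is_size.
exists S; split.
- exact (layers_H_free W_lw memS Hne (fun h => ltnW (Hdeg h)) Is_sparse).
- exact (layers_tw_ge W_lw memS W_proper Is_uniq t_lt).
Qed.
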